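(* Let $k\ge1$ and assume that $R_0,\dots,R_k$ (from BCG) have full column rank. Run DR-BCG with the same $A,B,X_0$ (with any choice of the QR factorizations). Then DR-BCG is well defined up to index $k$ (all $S_{j}^TAS_{j}$, $j\le k-1$, are nonsingular), all $\widehat\Phi_j$ ($j\le k$) are nonsingular, and for $j=0,\dots,k$: $$\widehat X_j=X_j,\qquad R_j=Q_j\widehat\Phi_j,\qquad P_j=S_j\widehat\Phi_j,$$ and for $j=1,\dots,k$: $\Upsilon_{j-1}=\widehat\Phi_{j-1}^{-1}\widehat\Pi_{j-1}\widehat\Phi_{j-1}$ and $$\Theta_{j-1}=\widehat\Phi_{j-1}^T\,\widehat\Pi_{j-1}\,\widehat\Phi_{j-1}.$$
   Context: Let $A\in\mathbb{R}^{n\times n}$ be symmetric positive definite, let $B,X_0\in\mathbb{R}^{n\times m}$, and let $X=A^{-1}B$. The block conjugate gradient (BCG) algorithm sets $R_0=B-AX_0$, $P_0=R_0$, and for $k=1,2,\dots$: $\Upsilon_{k-1}=(P_{k-1}^TAP_{k-1})^{-1}(R_{k-1}^TR_{k-1})$, $X_k=X_{k-1}+P_{k-1}\Upsilon_{k-1}$, $R_k=R_{k-1}-AP_{k-1}\Upsilon_{k-1}$, $\Xi_k=(R_{k-1}^TR_{k-1})^{-1}(R_k^TR_k)$, $P_k=R_k+P_{k-1}\Xi_k$. Define $\mathfrak{E}_k=(X-X_k)^TA(X-X_k)$ and $\Theta_k=(R_k^TR_k)\Upsilon_k$. The Dubrulle-R BCG algorithm (DR-BCG) sets $\widehat X_0=X_0$,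 computes a QR factorization $B-AX_0=Q_0\widehat\Phi_0$ ($Q_0$ with orthonormal columns, $\widehat\Phi_0\in\mathbb{R}^{m\times m}$ upper triangular), $S_0=Q_0$, and for $k=1,2,\dots$: $\widehat\Pi_{k-1}=(S_{k-1}^TAS_{k-1})^{-1}$, $\widehat X_k=\widehat X_{k-1}+S_{k-1}\widehat\Pi_{k-1}\widehat\Phi_{k-1}$, a QR factorization $Q_{k-1}-AS_{k-1}\widehat\Pi_{k-1}=Q_k\widehat\Psi_k$, $S_k=Q_k+S_{k-1}\widehat\Psi_k^T$, and $\widehat\Phi_k=\widehat\Psi_k\widehat\Phi_{k-1}$. *)

From HB Require Import structures.
From mathcomp Require Import all_boot all_order all_algebra.
Set Implicit Arguments. Unset Strict Implicit. Unset Printing Implicit Defensive.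
Import Order.TTheory GRing.Theory Num.Theory.
Local Open Scope ring_scope.

Definition spd (R : realFieldType) (n : nat) (A : 'M[R]_n) : Prop :=
  A^T = A /\ forall x : 'cV[R]_n, x != 0 -> 0 < (x^T *m A *m x) 0 0.

Definition upper_tri (R : realFieldType) (m : nat) (T : 'M[R]_m) : Prop :=
  forall i j : 'I_m, (j < i)%N -> T i j = 0.

Definition orthonormal_cols (R : realFieldType) (n m : nat) (Q : 'M[R]_(n, m)) : Prop :=
  Q^T *m Q = 1%:M.

(* BCG iterates (X_k, R_k, P_k).  Inverses are taken with invmx (a total
   function); under the hypotheses of the theorem all inverted matrices are
   nonsingular. *)
Fixpoint bcg (R : realFieldType) (n m : nat) (A : 'M[R]_n) (B X0 : 'M[R]_(n, m))
    (k : nat) : 'M[R]_(n, m) * 'M[R]_(n, m) * 'M[R]_(n, m) :=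
  match k with
  | 0 => let R0 := B - A *m X0 in (X0, R0, R0)
  | k'.+1 =>
      let: (X, Rk, P) := bcg A B X0 k' in
      let Ups := invmx (P^T *m A *m P) *m (Rk^T *m Rk) in
      let X' := X + P *m Ups in
      let R' := Rk - A *m P *m Ups in
      let Xi := invmx (Rk^T *m Rk) *m (R'^T *m R') in
      (X', R', R' + P *m Xi)
  end.

Definition bcgX R n m A B X0 k := ((@bcg R n m A B X0 k).1).1.
Definition bcgR R n m A B X0 k := ((@bcg R n m A B X0 k).1).2.
Definition bcgP R n m A B X0 k := (@bcg R n m A B X0 k).2.

Definition bcgUps (R : realFieldType) n m (A : 'M[R]_n) (B X0 : 'M[R]_(n, m)) k : 'M[R]_m :=
  let P := bcgP A B X0 k in let Rk := bcgR A B X0 k in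
  invmx (P^T *m A *m P) *m (Rk^T *m Rk).

Definition bcgTheta (R : realFieldType) n m (A : 'M[R]_n) (B X0 : 'M[R]_(n, m)) k : 'M[R]_m :=
  let Rk := bcgR A B X0 k in (Rk^T *m Rk) *m bcgUps A B X0 k.

Definition drbcg_run (R : realFieldType) (n m : nat) (A : 'M[R]_n) (B X0 : 'M[R]_(n, m))
    (k : nat) (Xh Q S : nat -> 'M[R]_(n, m)) (Phi Psi Pi : nat -> 'M[R]_m) : Prop :=
  [/\ Xh 0 = X0,
      B - A *m X0 = Q 0 *m Phi 0 /\ orthonormal_cols (Q 0) /\ upper_tri (Phi 0),
      S 0 = Q 0 &
      forall j, (1 <= j <= k)%N ->
        [/\ Pi j.-1 = invmx ((S j.-1)^T *m A *m S j.-1),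
            Xh j = Xh j.-1 + S j.-1 *m Pi j.-1 *m Phi j.-1,
            Q j.-1 - A *m S j.-1 *m Pi j.-1 = Q j *m Psi j
              /\ orthonormal_cols (Q j) /\ upper_tri (Psi j),
            S j = Q j + S j.-1 *m (Psi j)^T &
            Phi j = Psi j *m Phi j.-1]].

From HB Require Import structures.
From mathcomp Require Import all_boot all_order all_algebra.
Set Implicit Arguments.
Unset Strict Implicit.
Unset Printing Implicit Defensive.

Import Order.TTheory GRing.Theory Num.Theory.
Local Open Scope ring_scope.

(* If R_j = Q_j Phi_j and P_j = S_j Phi_j with Phi_j invertible,
   then Pi_j = (S_j^T A S_j)^-1 is the congruence Phi_j (P_j^T A P_j)^-1 Phi_j^T,
   and orthonormality of Q_j gives R_j^T R_j = Phi_j^T Phi_j, whence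
   Upsilon_j = Phi_j^-1 Pi_j Phi_j; substituted into the BCG recurrences this is
   exactly one DR-BCG step, with Phi_{j+1} = Psi_{j+1} Phi_j.  P_j^T A P_j is
   invertible because A is positive definite and the conjugacy
   P_j^T R_j = R_j^T R_j forces P_j to have full column rank along with R_j;
   Phi_j is invertible because rank (Q_j Phi_j) = rank R_j = m. *)

Lemma mulmx_trmx_row_gt0 (R : realFieldType) p (v : 'rV[R]_p) :
  v != 0 -> 0 < (v *m v^T) 0 0.
Proof.
move=> v_neq0; rewrite lt_def; apply/andP; split; last first.
  by rewrite mxE sumr_ge0 // => i _; rewrite mxE -expr2 sqr_ge0.
apply: contra v_neq0; rewrite mxE.
under eq_bigr => i _ do rewrite mxE -expr2.
rewrite psumr_eq0 => [/allP v_sq0|i _]; last exact: sqr_ge0.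
apply/eqP/rowP => i; rewrite mxE.
by apply/eqP; rewrite -sqrf_eq0; apply: v_sq0; rewrite mem_index_enum.
Qed.

Lemma spd1 (R : realFieldType) n : spd (1%:M : 'M[R]_n).
Proof.
split; first exact: trmx1.
by move=> x x_neq0; rewrite mulmx1 -{2}[x]trmxK mulmx_trmx_row_gt0 ?trmx_eq0.
Qed.

Section SpdCongruence.
Variables (R : realFieldType) (n m : nat) (A : 'M[R]_n).
Hypothesis spdA : spd A.

Lemma spd_congr_unitmx (P : 'M[R]_(n, m)) :
  row_free P^T -> P^T *m A *m P \in unitmx.
Proof.
case: spdA => _ A_pos freePT; rewrite -row_free_unit; apply: inj_row_free => u Hu.
have Pu0 : P *m u^T = 0.
  apply/eqP; apply: contraT => /A_pos.
  by rewrite trmx_mul trmxK !mulmxA -(mulmxA u) -(mulmxA u) Hu !mul0mx mxE ltxx.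
apply/eqP; rewrite -(mulmx_free_eq0 _ freePT).
by rewrite -[u *m _]trmxK trmx_mul trmxK Pu0 trmx0.
Qed.

End SpdCongruence.

Lemma gram_unitmx (R : realFieldType) n m (M : 'M[R]_(n, m)) :
  \rank M = m -> M^T *m M \in unitmx.
Proof.
move=> rankM; have := @spd_congr_unitmx R n m 1%:M (spd1 R n) M.
rewrite mulmx1; apply; by rewrite /row_free mxrank_tr rankM.
Qed.

Lemma mulmx_unit_row_free (F : fieldType) m p (M : 'M[F]_(m, p)) (N : 'M[F]_(p, m)) :
  M *m N \in unitmx -> row_free M.
Proof.
rewrite -row_free_unit /row_free => /eqP rankMN.
by rewrite eqn_leq rank_leq_row -{1}rankMN mxrankM_maxl.
Qed.

Lemma mulmx_rank_unitmx (F : fieldType) n m (Q : 'M[F]_(n, m)) (Phi : 'M[F]_m) :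
  \rank (Q *m Phi) = m -> Phi \in unitmx.
Proof.
move=> rankQPhi; rewrite -row_full_unit /row_full eqn_leq rank_leq_col.
by rewrite -{1}rankQPhi mxrankM_maxr.
Qed.

Lemma spd_congr_unitmx_gram (R : realFieldType) n m (A : 'M[R]_n) (P Res : 'M[R]_(n, m)) :
  spd A -> \rank Res = m -> P^T *m Res = Res^T *m Res -> P^T *m A *m P \in unitmx.
Proof.
move=> spdA rankRes PR_RR; apply: spd_congr_unitmx => //.
by apply: (@mulmx_unit_row_free _ _ _ _ Res); rewrite PR_RR gram_unitmx.
Qed.

Section InverseAlgebra.
Variables (R : comUnitRingType) (n m : nat).
Implicit Types (M N Phi : 'M[R]_m) (A : 'M[R]_n) (Q S : 'M[R]_(n, m)).

Lemma invmx_mul M N :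
  M \in unitmx -> N \in unitmx -> invmx (M *m N) = invmx N *m invmx M.
Proof.
move=> uM uN; have uMN : M *m N \in unitmx by rewrite unitmx_mul uM.
by rewrite -[RHS]mul1mx -(mulVmx uMN) -!mulmxA (mulKVmx uN) (mulmxV uM) mulmx1.
Qed.

Lemma congr_mulmx A S Phi :
  (S *m Phi)^T *m A *m (S *m Phi) = Phi^T *m (S^T *m A *m S) *m Phi.
Proof. by rewrite trmx_mul !mulmxA. Qed.

Lemma congr_unitmx A S Phi : Phi \in unitmx ->
  ((S *m Phi)^T *m A *m (S *m Phi) \in unitmx) = (S^T *m A *m S \in unitmx).
Proof. by move=> uPhi; rewrite congr_mulmx !unitmx_mul unitmx_tr uPhi andbT. Qed.

Lemma congr_invmx A S Phi : Phi \in unitmx -> S^T *m A *m S \in unitmx ->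
  invmx ((S *m Phi)^T *m A *m (S *m Phi))
    = invmx Phi *m invmx (S^T *m A *m S) *m invmx Phi^T.
Proof.
move=> uPhi uSAS; have uPhiT : Phi^T \in unitmx by rewrite unitmx_tr.
rewrite congr_mulmx invmx_mul ?unitmx_mul ?uPhiT //.
by rewrite invmx_mul // mulmxA.
Qed.

Lemma gram_orthonormal_mul Q Phi :
  Q^T *m Q = 1%:M -> (Q *m Phi)^T *m (Q *m Phi) = Phi^T *m Phi.
Proof. by move=> QQ1; rewrite trmx_mul -mulmxA (mulmxA Q^T) QQ1 mul1mx. Qed.

End InverseAlgebra.

Section BCG.
Variables (R : realFieldType) (n m : nat) (A : 'M[R]_n) (B X0 : 'M[R]_(n, m)).

Local Notation X := (bcgX A B X0).
Local Notation Res := (bcgR A B X0).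
Local Notation P := (bcgP A B X0).
Local Notation Ups := (bcgUps A B X0).

Lemma bcgS j :
  [/\ X j.+1 = X j + P j *m Ups j,
      Res j.+1 = Res j - A *m P j *m Ups j &
      P j.+1 = Res j.+1 + P j *m (invmx ((Res j)^T *m Res j) *m ((Res j.+1)^T *m Res j.+1))].
Proof. by rewrite /bcgUps /bcgX /bcgR /bcgP /=; case: (bcg A B X0 j) => [[]]. Qed.

Lemma bcgP_tr_bcgR k : spd A -> (forall j, (j <= k)%N -> \rank (Res j) = m) ->
  forall j, (j <= k)%N -> (P j)^T *m Res j = (Res j)^T *m Res j.
Proof.
move=> spdA rankR; elim=> [//|j IH] /ltnW le_jk.
have uPAP := spd_congr_unitmx_gram spdA (rankR j le_jk) (IH le_jk).
have [_ RS PS] := bcgS j.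
have PR'0 : (P j)^T *m Res j.+1 = 0.
  by rewrite RS /bcgUps mulmxBr !mulmxA (mulmxV uPAP) mul1mx IH // subrr.
by rewrite PS linearD /= mulmxDl trmx_mul -mulmxA PR'0 mulmx0 addr0.
Qed.

End BCG.

Section Correspondence.
Variables (R : realFieldType) (n m : nat) (A : 'M[R]_n) (B X0 : 'M[R]_(n, m)) (k : nat)
  (Xh Q S : nat -> 'M[R]_(n, m)) (Phi Psi Pi : nat -> 'M[R]_m).
Hypothesis spdA : spd A.
Hypothesis rankR : forall j, (j <= k)%N -> \rank (bcgR A B X0 j) = m.
Hypothesis run : drbcg_run A B X0 k Xh Q S Phi Psi Pi.

Local Notation X := (bcgX A B X0).
Local Notation Res := (bcgR A B X0).
Local Notation P := (bcgP A B X0).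
Local Notation Ups := (bcgUps A B X0).

Lemma drbcg_runS j : (j < k)%N ->
  [/\ Pi j = invmx ((S j)^T *m A *m S j),
      Xh j.+1 = Xh j + S j *m Pi j *m Phi j,
      Q j - A *m S j *m Pi j = Q j.+1 *m Psi j.+1,
      S j.+1 = Q j.+1 + S j *m (Psi j.+1)^T &
      Phi j.+1 = Psi j.+1 *m Phi j].
Proof. by case: run => _ _ _ step /(step j.+1) [? ? [? _] ? ?]. Qed.

Lemma drbcg_orthonormal j : (j <= k)%N -> (Q j)^T *m Q j = 1%:M.
Proof.
case: run => _ [_ [QQ0 _]] _ step; case: j => [//|j] /(step j.+1).
by case=> _ _ [_ []].
Qed.

Lemma bcgPAP_unitmx j : (j <= k)%N -> (P j)^T *m A *m P j \in unitmx.
Proof.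
move=> le_jk.
exact: (spd_congr_unitmx_gram spdA (rankR le_jk) (bcgP_tr_bcgR spdA rankR le_jk)).
Qed.

Definition drbcg_agrees j :=
  [/\ Xh j = X j, Res j = Q j *m Phi j, P j = S j *m Phi j & Phi j \in unitmx].

Lemma drbcg_agrees0 : drbcg_agrees 0.
Proof.
case: run => Xh0 [R0 _] S0 _.
split=> //; first by rewrite /bcgP /= S0.
by apply: (@mulmx_rank_unitmx _ _ _ (Q 0)); rewrite -R0 (rankR (leq0n k)).
Qed.

Section Step.
Variable j : nat.
Hypotheses (lt_jk : (j < k)%N) (agree : drbcg_agrees j).

Lemma drbcg_SAS_unit : (S j)^T *m A *m S j \in unitmx.
Proof.
have [_ _ Pj uPhi] := agree.
by rewrite -(congr_unitmx _ _ uPhi) -Pj bcgPAP_unitmx // ltnW.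
Qed.

Lemma drbcg_Ups : Ups j = invmx (Phi j) *m Pi j *m Phi j.
Proof.
have [_ Rj Pj uPhi] := agree; have [Pij _ _ _ _] := drbcg_runS lt_jk.
have uPhiT : (Phi j)^T \in unitmx by rewrite unitmx_tr.
rewrite /bcgUps Rj Pj (congr_invmx uPhi drbcg_SAS_unit) -Pij.
by rewrite (gram_orthonormal_mul _ (drbcg_orthonormal (ltnW lt_jk))) !mulmxA (mulmxKV uPhiT).
Qed.

Lemma drbcg_agreesS : drbcg_agrees j.+1.
Proof.
have [Xj Rj Pj uPhi] := agree.
have [_ XhS QS SS PhiS] := drbcg_runS lt_jk.
have [XS RS PS] := bcgS A B X0 j.
have SPiPhi : S j *m Pi j *m Phi j = P j *m Ups j.
  by rewrite drbcg_Ups Pj !mulmxA (mulmxK uPhi).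
have RjS : Res j.+1 = Q j.+1 *m Phi j.+1.
  by rewrite RS PhiS mulmxA -QS mulmxBl Rj -mulmxA -SPiPhi !mulmxA.
have uPhiT : (Phi j)^T \in unitmx by rewrite unitmx_tr.
split.
- by rewrite XhS Xj SPiPhi XS.
- exact: RjS.
- have QQj := drbcg_orthonormal (ltnW lt_jk).
  have QQS := drbcg_orthonormal lt_jk.
  rewrite PS RjS Rj (gram_orthonormal_mul _ QQj) (gram_orthonormal_mul _ QQS).
  by rewrite invmx_mul // Pj SS mulmxDl PhiS trmx_mul !mulmxA (mulmxK uPhi) (mulmxKV uPhiT).
- by apply: (@mulmx_rank_unitmx _ _ _ (Q j.+1)); rewrite -RjS rankR.
Qed.

End Step.

Lemma drbcg_agrees_le j : (j <= k)%N -> drbcg_agrees j.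
Proof.
elim: j => [_|j IH lt_jk]; first exact: drbcg_agrees0.
exact: drbcg_agreesS lt_jk (IH (ltnW lt_jk)).
Qed.

Lemma drbcg_Theta j : (j < k)%N ->
  bcgTheta A B X0 j = (Phi j)^T *m Pi j *m Phi j.
Proof.
move=> lt_jk; have agree := drbcg_agrees_le (ltnW lt_jk).
have [_ Rj _ uPhi] := agree.
rewrite /bcgTheta (drbcg_Ups lt_jk agree) Rj.
by rewrite (gram_orthonormal_mul _ (drbcg_orthonormal (ltnW lt_jk))) !mulmxA (mulmxK uPhi).
Qed.

End Correspondence.

Theorem mainTheorem14 (R : realFieldType) (n m : nat) (A : 'M[R]_n)
    (B X0 : 'M[R]_(n, m)) (k : nat)
    (Xh Q S : nat -> 'M[R]_(n, m)) (Phi Psi Pi : nat -> 'M[R]_m) :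
  spd A -> (1 <= k)%N ->
  (forall j, (j <= k)%N -> \rank (bcgR A B X0 j) = m) ->
  drbcg_run A B X0 k Xh Q S Phi Psi Pi ->
  [/\ forall j, (j < k)%N -> (S j)^T *m A *m S j \in unitmx,
      forall j, (j <= k)%N -> Phi j \in unitmx,
      forall j, (j <= k)%N ->
        [/\ Xh j = bcgX A B X0 j,
            bcgR A B X0 j = Q j *m Phi j &
            bcgP A B X0 j = S j *m Phi j] &
      forall j, (1 <= j <= k)%N ->
        bcgUps A B X0 j.-1 = invmx (Phi j.-1) *m Pi j.-1 *m Phi j.-1 /\
        bcgTheta A B X0 j.-1 = (Phi j.-1)^T *m Pi j.-1 *m Phi j.-1].
Proof.
move=> spdA _ rankR run.
have agree j (le_jk : (j <= k)%N) := drbcg_agrees_le spdA rankR run le_jk.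
split.
- by move=> j lt_jk; exact: (drbcg_SAS_unit spdA rankR lt_jk (agree j (ltnW lt_jk))).
- by move=> j /agree[].
- by move=> j /agree[].
case=> [//|j] /= lt_jk; split.
- exact: (drbcg_Ups spdA rankR run lt_jk (agree j (ltnW lt_jk))).
- exact: (drbcg_Theta spdA rankR run lt_jk).
Qed.
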